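(* Fix real numbers $r_1,\dots,r_m\in[0,1]$. Then the set $W(r_1,\dots,r_m)=\{\mathbf{x}\in\mathcal{C}_n:\mathbf{x}_T^{(j)}=r_j\text{ for all }j\in[m]\}$ contains at most $2^{n(m+1)}$ Generalized Nash equilibria of $G^{(2)}$.
   Context: $G^{(2)}$ is a Fragile multi-CPR Game with $n\ge1$ players and $m\ge1$ CPRs: $[k]=\{1,\dots,k\}$, $C_m=\{(x_1,\dots,x_m)\in[0,1]^m:\sum_j x_j\le1\}$, $\mathcal{C}_n=\prod_{i\in[n]}C_m$, $\mathcal{C}_{-i}=\prod_{[n]\setminus\{i\}}C_m$. A profile is $\mathbf{x}=(\mathbf{x}_1,\dots,\mathbf{x}_n)$, $\mathbf{x}_i=(x_{i1},\dots,x_{im})$; write $\mathbf{x}=(\mathbf{x}_i,\mathbf{x}_{-i})$; $\mathbf{x}_T^{(j)}=\sum_i x_{ij}$, $\mathbf{x}_T^{j|i}=\sum_{\ell\ne i}x_{\ell j}$. Each CPR $j$ has return rate $\mathcal{R}_j(t)>1$ and failure probability $p_j(t)\in[0,1]$; each player $i$ has parameters $a_i,k_i$. $\mathcal{F}_{ij}(t)=(\mathcal{R}_j(t)-1)^{a_i}(1-p_j(t))-k_ip_j(t)$; utility $\mathcal{V}_i(\mathbf{x}_i;\mathbf{x}_{-i})=\sum_j x_{ij}^{a_i}\mathcal{F}_{ij}(\mathbf{x}_T^{(j)})$. Assumption: (1) $p_j(0)=0$, $p_j(t)=1$ for $t\ge1$; (2) $a_i\in(0,1]$, $k_i>0$;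 (3) each $\mathcal{F}_{ij}$ (continuous on $[0,1]$) has strictly negative first and second derivatives on $(0,1)$. $\omega_{ij}\in(0,1)$ is the unique zero of $\mathcal{F}_{ij}$ in $(0,1)$. $A(\mathbf{x}_{-i})=\{j:\mathbf{x}_T^{j|i}<\omega_{ij}\}$. $\vartheta_i(\mathbf{x}_{-i})=C_m\cap\big(\prod_{j\in A(\mathbf{x}_{-i})}[0,\omega_{ij}-\mathbf{x}_T^{j|i}]\times\prod_{j\notin A(\mathbf{x}_{-i})}\{0\}\big)$. A Generalized Nash equilibrium is $\mathbf{x}\in\mathcal{C}_n$ with, for all $i$, $\mathbf{x}_i\in\vartheta_i(\mathbf{x}_{-i})$ and $\mathcal{V}_i(\mathbf{x}_i;\mathbf{x}_{-i})\ge\mathcal{V}_i(\mathbf{z};\mathbf{x}_{-i})$ for all $\mathbf{z}\in\vartheta_i(\mathbf{x}_{-i})$. *)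

From HB Require Import structures.
From mathcomp Require Import all_boot all_order all_algebra.
From mathcomp Require Import all_classical all_reals all_analysis.
Set Implicit Arguments. Unset Strict Implicit. Unset Printing Implicit Defensive.
Import Order.TTheory GRing.Theory Num.Theory.
Local Open Scope ring_scope.

Section Game.
Variable R : realType.
Variables n m : nat.

(* A single player's strategy: a vector of investments in the m CPRs, in C_m. *)
Definition in_Cm (z : 'I_m -> R) : Prop :=
  (forall j, 0 <= z j <= 1) /\ \sum_(j < m) z j <= 1.

(* A profile x : player i, CPR j |-> x_{ij};  x \in \mathcal{C}_n. *)
Definition in_Cn (x : 'M[R]_(n, m)) : Prop := forall i, in_Cm (fun j => x i j).

Definition xT (x : 'M[R]_(n, m)) (j : 'I_m) : R := \sum_(i < n) x i j.
Definition xTm (x : 'M[R]_(n, m)) (i : 'I_n) (j : 'I_m) : R :=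
  \sum_(l < n | l != i) x l j.

Definition Ffun (a k : R) (Rj pj : R -> R) (t : R) : R :=
  powR (Rj t - 1) a * (1 - pj t) - k * pj t.

Variables (a k : 'I_n -> R) (Rr p : 'I_m -> R -> R) (omega : 'I_n -> 'I_m -> R).

Definition Vutil (i : 'I_n) (z : 'I_m -> R) (x : 'M[R]_(n, m)) : R :=
  \sum_(j < m) powR (z j) (a i) * Ffun (a i) (k i) (Rr j) (p j) (z j + xTm x i j).

Definition in_theta (i : 'I_n) (x : 'M[R]_(n, m)) (z : 'I_m -> R) : Prop :=
  in_Cm z /\
  forall j, (xTm x i j < omega i j -> 0 <= z j <= omega i j - xTm x i j) /\
            (~ (xTm x i j < omega i j) -> z j = 0).

Definition GNE (x : 'M[R]_(n, m)) : Prop :=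
  in_Cn x /\
  forall i, in_theta i x (fun j => x i j) /\
    forall z, in_theta i x z -> Vutil i z x <= Vutil i (fun j => x i j) x.

End Game.

From HB Require Import structures.
From mathcomp Require Import all_boot all_order all_algebra.
From mathcomp Require Import all_classical all_reals all_analysis.
From mathcomp Require Import ring lra.
Import Order.TTheory GRing.Theory Num.Theory numFieldNormedType.Exports.
Local Open Scope ring_scope.

(* Let x be a GNE whose column totals are r.  If x_ij > 0 then r_j < omega_ij:
   at r_j = omega_ij the j-th payoff term of player i vanishes, and halving
   x_ij would make it positive.  Hence the marginal payoff of player i on CPR j
   at x is g_ij(x_ij), where g_ij(y) = a_i y^(a_i-1) F_ij(r_j) + y^a_i F_ij'(r_j)
   is strictly decreasing on (0, +oo).  Fermat's rule along feasible directions
   inside the support of x_i gives g_ij(x_ij) = 0 on the support when the budget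
   of player i is slack, and a common value of g_ij(x_ij) on the support when it
   is exhausted; in the latter case two such rows that differ would have to
   differ in the same direction everywhere on the support, contradicting equal
   budgets.  So each row x_i is determined by its support and by whether
   sum_j x_ij = 1, which leaves at most 2^(m+1) choices per player. *)

Lemma uniq_size_le_card {X : eqType} {T : finType} (f : X -> T) {s : seq X} :
  uniq s -> {in s &, injective f} -> (size s <= #|T|)%N.
Proof.
move=> s_uniq f_inj; rewrite -(size_map f) -(card_uniqP _) ?max_card //.
by rewrite map_inj_in_uniq.
Qed.

Lemma sumr_delta_mul {V : pzRingType} {I : finType} (j : I) (f : I -> V) :
  \sum_i (i == j)%:R * f i = f j.
Proof. by under eq_bigr do rewrite mulr_natl mulrb; rewrite -big_mkcond big_pred1_eq. Qed.

Lemma sumr_delta {V : pzRingType} {I : finType} (j : I) : \sum_i (i == j)%:R = 1 :> V.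
Proof.
by rewrite -[RHS](sumr_delta_mul j (fun=> 1)); apply: eq_bigr => i _; rewrite mulr1.
Qed.

Lemma is_derive_line_powR_mul (R : realType) (F : R -> R) (al c x d t : R) :
  0 < x + t * d -> derivable F (x + t * d + c) 1 ->
  is_derive t 1 (fun s => powR (x + s * d) al * F (x + s * d + c))
    (d * (al * powR (x + t * d) (al - 1) * F (x + t * d + c)
          + powR (x + t * d) al * derive1 F (x + t * d + c))).
Proof.
set y := x + t * d => y_gt0 /derivableP dF.
have dline : is_derive t 1 (fun s => x + s * d) d.
  have := is_deriveD (is_derive_cst x t 1) (is_deriveZ d (is_derive_id t 1)).
  rewrite add0r /GRing.scale /= mulr1.
  have -> // : (cst x + d *: id)%R = (fun s : R => x + s * d).
  by apply/funext => s /=; rewrite mulrC.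
have dshift := @is_derive1_comp _ F (shift c) y _ _ dF (is_derive_shift y 1 c).
have dprod := is_deriveM (is_derive1_powR al y_gt0) dshift.
have := @is_derive1_comp _ _ (fun s => x + s * d) t _ _ dprod dline.
rewrite derive1E /GRing.scale /= mulr1 => dcomp.
by congr (is_derive _ _ _ _): dcomp; rewrite /shift; ring.
Qed.

Lemma powR_marginal_decreasing (R : realType) (al A B : R) :
  0 < al <= 1 -> 0 < A -> B < 0 ->
  {in `]0, +oo[ &, {homo (fun y : R => al * powR y (al - 1) * A + powR y al * B) :
    y1 y2 /~ y1 < y2}}.
Proof.
move=> /andP[al_gt0 al_le1] A_gt0 B_lt0 y2 y1.
rewrite !in_itv /= !andbT => y2_gt0 y1_gt0 y12.
have decr_pow : powR y2 (al - 1) <= powR y1 (al - 1).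
  rewrite /powR !gt_eqF // ler_expR; apply: ler_wnM2l; first by rewrite subr_le0.
  by rewrite ler_ln ?posrE // ltW.
have incr_pow : powR y1 al < powR y2 al by apply: gt0_ltr_powR; rewrite // nnegrE ltW.
by apply: ler_ltD; [rewrite -!mulrA ler_pM2l // ler_pM2r | rewrite ltr_nM2r].
Qed.

Section Game.
Variables (R : realType) (n m : nat) (a k : 'I_n -> R) (Rr p : 'I_m -> R -> R)
  (omega : 'I_n -> 'I_m -> R).
Hypothesis ha : forall i, 0 < a i <= 1.
Hypothesis hFc : forall i j, {within `[0, 1], continuous (Ffun (a i) (k i) (Rr j) (p j))}%classic.
Hypothesis hFd : forall i j (t : R), 0 < t < 1 ->
     derivable (Ffun (a i) (k i) (Rr j) (p j)) t 1 /\
     derive1 (Ffun (a i) (k i) (Rr j) (p j)) t < 0 /\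
     derivable (derive1 (Ffun (a i) (k i) (Rr j) (p j))) t 1 /\
     derive1 (derive1 (Ffun (a i) (k i) (Rr j) (p j))) t < 0.
Hypothesis homega : forall i j, 0 < omega i j < 1 /\
     Ffun (a i) (k i) (Rr j) (p j) (omega i j) = 0.

Local Notation F i j := (Ffun (a i) (k i) (Rr j) (p j)).
Local Notation V i z x := (Vutil a k Rr p i z x).
Local Notation GN x := (GNE a k Rr p omega x).

Lemma Ffun_decreasing i j : {in `[0, 1] &, {homo F i j : s t /~ s < t}}.
Proof.
apply: ltr0_derive1_lt_cc; last exact: hFc.
- by move=> t; rewrite in_itv /= => /(hFd i j) [].
- by move=> t; rewrite in_itv /= => /(hFd i j) [_ []].
Qed.

Lemma Ffun_gt0 i j t : 0 <= t < omega i j -> 0 < F i j t.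
Proof.
case/andP=> t_ge0 t_lt; have [/andP[w_gt0 w_lt1] F_w] := homega i j.
have t_lt1 := lt_trans t_lt w_lt1.
rewrite -F_w; apply: Ffun_decreasing t_lt.
  by rewrite in_itv /= !ltW.
by rewrite in_itv /= t_ge0 ltW.
Qed.

Lemma in_Cn_ge0 {x : 'M[R]_(n, m)} i j : in_Cn x -> 0 <= x i j.
Proof. by move=> /(_ i) [/(_ j) /andP[]]. Qed.

Lemma in_Cn_le1 {x : 'M[R]_(n, m)} i j : in_Cn x -> x i j <= 1.
Proof. by move=> /(_ i) [/(_ j) /andP[]]. Qed.

Lemma in_Cn_row_sum {x : 'M[R]_(n, m)} i : in_Cn x -> \sum_(j < m) x i j <= 1.
Proof. by move=> /(_ i) []. Qed.

Lemma xTm_ge0 {x : 'M[R]_(n, m)} i j : in_Cn x -> 0 <= xTm x i j.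
Proof. by move=> x_in; apply: sumr_ge0 => l _; exact: in_Cn_ge0. Qed.

Lemma xT_row_split (x : 'M[R]_(n, m)) i j : xT x j = x i j + xTm x i j.
Proof. by rewrite /xT (bigD1 i). Qed.

Lemma Vutil_update i (x : 'M[R]_(n, m)) (z : 'I_m -> R) j v :
  V i (fun l => if l == j then v else z l) x =
  V i z x - powR (z j) (a i) * F i j (z j + xTm x i j)
          + powR v (a i) * F i j (v + xTm x i j).
Proof.
rewrite /Vutil (bigD1 j) //= eqxx [in RHS](bigD1 j) //=.
under eq_bigr => l /negbTE -> do [].
ring.
Qed.

Lemma is_derive_Vutil_line i (x : 'M[R]_(n, m)) (z d : 'I_m -> R) t :
  (forall j, d j != 0 ->
     0 < z j + t * d j /\ 0 < z j + t * d j + xTm x i j < 1) ->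
  is_derive t 1 (fun s => V i (fun j => z j + s * d j) x)
    (\sum_(j < m) d j *
       (a i * powR (z j + t * d j) (a i - 1) * F i j (z j + t * d j + xTm x i j)
        + powR (z j + t * d j) (a i) * derive1 (F i j) (z j + t * d j + xTm x i j))).
Proof.
move=> hd; rewrite [X in is_derive _ _ X](_ : _ =
  \sum_(j < m) fun s => powR (z j + s * d j) (a i) * F i j (z j + s * d j + xTm x i j)).
  2: by apply/funext => s; rewrite fct_sumE.
apply: is_derive_sum => j; have [->|dj_neq0] := eqVneq (d j) 0.
  rewrite mul0r; under [X in is_derive _ _ X]funext => s do rewrite mulr0 addr0.
  exact: is_derive_cst.
have [y_gt0 y_in] := hd j dj_neq0.
by apply: is_derive_line_powR_mul => //; have [] := hFd i j _ y_in.
Qed.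

Variable r : 'I_m -> R.

(* The derivative of y |-> y^a_i F_ij(y + x_T^{j|i}) at a point where y + x_T^{j|i} = r_j. *)
Definition marginal i j (y : R) : R :=
  a i * powR y (a i - 1) * F i j (r j) + powR y (a i) * derive1 (F i j) (r j).

Lemma marginal_decreasing {i j} : 0 < r j < omega i j ->
  {in `]0, +oo[ &, {mono marginal i j : y1 y2 /~ y1 <= y2}}.
Proof.
move=> /andP[r_gt0 r_lt]; apply: le_nmono_in; apply: powR_marginal_decreasing.
- exact: ha.
- by apply: Ffun_gt0; rewrite ltW.
- have [/andP[_ w_lt1] _] := homega i j.
  by have [_ []] := hFd i j _ (introT andP (conj r_gt0 (lt_trans r_lt w_lt1))).
Qed.

Section Equilibrium.
Context {x : 'M[R]_(n, m)}.
Hypothesis x_gne : GN x.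
Hypothesis x_total : forall j, xT x j = r j.

Let x_in : in_Cn x. Proof. by case: x_gne. Qed.
Let x_feasible i : in_theta omega i x (fun j => x i j).
Proof. by have [_ /(_ i) []] := x_gne. Qed.
Let x_best {i} {z : 'I_m -> R} : in_theta omega i x z -> V i z x <= V i (fun j => x i j) x.
Proof. by have [_ /(_ i) [_]] := x_gne; apply. Qed.

Lemma in_theta_shrink i (z : 'I_m -> R) :
  (forall j, 0 <= z j <= x i j) -> in_theta omega i x z.
Proof.
move=> z_bnd; have [_ x_theta] := x_feasible i.
split; first split.
- move=> j; have /andP[z_ge0 z_le] := z_bnd j.
  by rewrite z_ge0 (le_trans z_le) ?in_Cn_le1.
- apply: le_trans (in_Cn_row_sum i x_in); apply: ler_sum => j _.
  by have /andP[] := z_bnd j.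
- move=> j; have [in_A notin_A] := x_theta j; have /andP[z_ge0 z_le] := z_bnd j.
  split; first by move=> /in_A /andP[_ x_le]; rewrite z_ge0 (le_trans z_le x_le).
  by move=> /notin_A x0; apply/eqP; rewrite eq_le z_ge0 andbT -x0.
Qed.

Lemma support_total_bounds {i j} : 0 < x i j -> 0 < r j < omega i j.
Proof.
move=> x_gt0; have [_ x_theta] := x_feasible i; have [in_A notin_A] := x_theta j.
have r_split := xT_row_split x i j; rewrite x_total in r_split.
have tm_ge0 := xTm_ge0 i j x_in.
have in_Aj : xTm x i j < omega i j.
  by have [//|/negP/notin_A x0] := boolP (xTm x i j < omega i j); rewrite x0 ltxx in x_gt0.
have /andP[_ x_le] := in_A in_Aj.
have r_gt0 : 0 < r j by lra.
have r_le : r j <= omega i j by lra.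
rewrite r_gt0 lt_neqAle r_le andbT; apply/eqP => r_eq.
pose z l := if l == j then x i j / 2 else x i l.
have z_theta : in_theta omega i x z.
  apply: in_theta_shrink => l; rewrite /z; case: eqP => [->|_]; last by rewrite in_Cn_ge0 ?lexx.
  by apply/andP; split; lra.
have := x_best z_theta; rewrite /z (Vutil_update i x (fun l => x i l)) /=.
have -> : x i j + xTm x i j = omega i j by lra.
rewrite (homega i j).2 mulr0 subr0 gerDl leNgt => /negP; apply.
apply: mulr_gt0; first by apply: powR_gt0; lra.
by apply: Ffun_gt0; apply/andP; split; lra.
Qed.

Lemma support_margin i :
  exists2 e : R, 0 < e & forall j, 0 < x i j -> e <= x i j /\ e <= omega i j - r j.
Proof.
exists (\big[Num.min/1]_(j | 0 < x i j) Num.min (x i j) (omega i j - r j)).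
  apply: lt_bigmin => // j x_gt0; rewrite lt_min x_gt0 subr_gt0.
  by have /andP[] := support_total_bounds x_gt0.
move=> j x_gt0.
have := bigmin_le_cond 1 (P := fun l => 0 < x i l)
  (fun l => Num.min (x i l) (omega i l - r l)) x_gt0.
by rewrite le_min => /andP.
Qed.

Let line_bounds {i} {d : 'I_m -> R} {eps t j} :
  `|t| < eps -> `|d j| <= 1 -> eps <= x i j -> eps <= omega i j - r j ->
  0 < x i j + t * d j /\ x i j + t * d j + xTm x i j < omega i j.
Proof.
move=> t_lt d_le e_x e_w.
have : `|t * d j| < eps by rewrite normrM; apply: le_lt_trans t_lt; rewrite ler_piMr.
rewrite ltr_norml => /andP[lo hi]; have := xT_row_split x i j; rewrite x_total.
split; lra.
Qed.

Lemma in_theta_line {i} {d : 'I_m -> R} {eps t} : `|t| < eps ->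
  (forall j, d j != 0 -> [/\ eps <= x i j, eps <= omega i j - r j & `|d j| <= 1]) ->
  \sum_(j < m) x i j + t * \sum_(j < m) d j <= 1 ->
  in_theta omega i x (fun j => x i j + t * d j).
Proof.
move=> t_lt hd budget; have [_ x_theta] := x_feasible i.
split; first split.
- move=> j; have [->|dj_neq0] := eqVneq (d j) 0.
    by rewrite mulr0 addr0 in_Cn_ge0 ?in_Cn_le1.
  have [e_x e_w d_le] := hd j dj_neq0; have [lo hi] := line_bounds t_lt d_le e_x e_w.
  have := xTm_ge0 i j x_in; have [/andP[_ w_lt1] _] := homega i j.
  by move=> tm_ge0; apply/andP; split; lra.
- by rewrite big_split /= -mulr_sumr.
- move=> j; have [dj0|dj_neq0] := eqVneq (d j) 0.
    by rewrite /= dj0 mulr0 addr0; exact: x_theta.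
  have [e_x e_w d_le] := hd j dj_neq0; have [lo hi] := line_bounds t_lt d_le e_x e_w.
  split; first by move=> _; apply/andP; split; lra.
  by move=> not_lt; exfalso; apply: not_lt; lra.
Qed.

Lemma marginal_stationary i (d : 'I_m -> R) e : 0 < e ->
  (forall j, d j != 0 -> 0 < x i j /\ `|d j| <= 1) ->
  (forall t, `|t| < e -> \sum_(j < m) x i j + t * \sum_(j < m) d j <= 1) ->
  \sum_(j < m) d j * marginal i j (x i j) = 0.
Proof.
move=> e_gt0 hd budget; have [e' e'_gt0 margin] := support_margin i.
pose eps := Num.min e e'.
have eps_gt0 : 0 < eps by rewrite lt_min e_gt0.
have hd_eps j : d j != 0 -> [/\ eps <= x i j, eps <= omega i j - r j & `|d j| <= 1].
  move=> /hd [x_gt0 d_le]; have [e'_x e'_w] := margin j x_gt0.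
  by split; rewrite // ge_min ?e'_x ?e'_w orbT.
have line_ok t : `|t| < eps -> forall j, d j != 0 ->
    0 < x i j + t * d j /\ 0 < x i j + t * d j + xTm x i j < 1.
  move=> t_lt j /hd_eps [e_x e_w d_le]; have [lo hi] := line_bounds t_lt d_le e_x e_w.
  have := xTm_ge0 i j x_in; have [/andP[_ w_lt1] _] := homega i j.
  by move=> tm_ge0; split; [|apply/andP; split]; lra.
pose phi t := V i (fun j => x i j + t * d j) x.
have phi_max t : t \in `]- eps, eps[ -> phi t <= phi 0.
  rewrite in_itv /= -ltr_norml => t_lt.
  have -> : phi 0 = V i (fun j => x i j) x.
    by congr Vutil; apply/funext => j; rewrite mul0r addr0.
  apply/x_best/(in_theta_line t_lt hd_eps)/budget/(lt_le_trans t_lt).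
  by rewrite ge_min lexx.
have phi_derivable t : t \in `]- eps, eps[ -> derivable phi t 1.
  rewrite in_itv /= -ltr_norml => t_lt.
  by have [] := is_derive_Vutil_line i x (x i) d t (line_ok t t_lt).
have phi_crit : is_derive (0 : R) (1 : R) phi 0.
  apply: derive1_at_max phi_derivable _ phi_max.
  - lra.
  - by rewrite in_itv /= oppr_lt0 eps_gt0.
have eps_norm0 : `|0 : R| < eps by rewrite normr0.
have [_ D_phi0] := is_derive_Vutil_line i x (x i) d 0 (line_ok 0 eps_norm0).
have [_ D_phi0_eq0] := phi_crit.
rewrite -[RHS]D_phi0_eq0 D_phi0; apply: eq_bigr => j _.
by rewrite mul0r addr0 -xT_row_split x_total.
Qed.

Lemma marginal_eq0 {i j} : 0 < x i j -> \sum_(l < m) x i l < 1 ->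
  marginal i j (x i j) = 0.
Proof.
move=> x_gt0 slack.
have := @marginal_stationary i (fun l => (l == j)%:R) (1 - \sum_(l < m) x i l).
rewrite (sumr_delta_mul j (fun l => marginal i l (x i l))) sumr_delta; apply.
- by rewrite subr_gt0.
- by move=> l; case: (eqVneq l j) => [-> | ]; rewrite ?normr1 ?eqxx.
- by move=> t t_lt; rewrite mulr1; have := ler_norm t; lra.
Qed.

Lemma marginal_eq {i j j'} : 0 < x i j -> 0 < x i j' ->
  marginal i j (x i j) = marginal i j' (x i j').
Proof.
move=> x_gt0 x'_gt0; apply: subr0_eq.
pose d l : R := (l == j)%:R - (l == j')%:R.
have <- : \sum_(l < m) d l * marginal i l (x i l) = marginal i j (x i j) - marginal i j' (x i j').
  by under eq_bigr do rewrite mulrBl; rewrite sumrB !sumr_delta_mul.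
apply: (@marginal_stationary i d 1 ltr01).
- move=> l; rewrite /d; case: (eqVneq l j) => [-> _ | _].
    by split=> //; case: eqVneq; rewrite ?subrr ?normr0 ?subr0 ?normr1.
  case: (eqVneq l j') => [-> _ | _]; first by rewrite sub0r normrN normr1.
  by rewrite subrr eqxx.
- by move=> t _; rewrite sumrB !sumr_delta subrr mulr0 addr0 in_Cn_row_sum.
Qed.

End Equilibrium.

Section TwoEquilibria.
Variables (x y : 'M[R]_(n, m)) (i : 'I_n).
Hypotheses (x_gne : GN x) (x_total : forall j, xT x j = r j).
Hypotheses (y_gne : GN y) (y_total : forall j, xT y j = r j).
Hypothesis same_support : forall j, (0 < x i j) = (0 < y i j).

Let x_in : in_Cn x. Proof. by case: x_gne. Qed.
Let y_in : in_Cn y. Proof. by case: y_gne. Qed.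

Let eq_off_support j : ~~ (0 < x i j) -> x i j = y i j.
Proof.
move=> x_le0; have y_le0 : ~~ (0 < y i j) by rewrite -same_support.
rewrite -!leNgt in x_le0 y_le0.
by have := in_Cn_ge0 i j x_in; have := in_Cn_ge0 i j y_in; lra.
Qed.

Lemma row_eq_of_slack : \sum_(l < m) x i l < 1 -> \sum_(l < m) y i l < 1 ->
  forall j, x i j = y i j.
Proof.
move=> x_slack y_slack j; have [x_gt0|] := boolP (0 < x i j); last exact: eq_off_support.
have y_gt0 : 0 < y i j by rewrite -same_support.
apply: (dec_inj_in (marginal_decreasing (support_total_bounds x_gne x_total x_gt0))).
- by rewrite in_itv /= andbT.
- by rewrite in_itv /= andbT.
by rewrite (marginal_eq0 x_gne x_total x_gt0 x_slack) (marginal_eq0 y_gne y_total y_gt0 y_slack).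
Qed.

Lemma row_le_of_full_budget : \sum_(l < m) x i l = 1 -> \sum_(l < m) y i l = 1 ->
  forall j, y i j <= x i j.
Proof.
move=> x_full y_full j0; rewrite leNgt; apply/negP => lt0.
have y0_gt0 : 0 < y i j0 := le_lt_trans (in_Cn_ge0 i j0 x_in) lt0.
have x0_gt0 : 0 < x i j0 by rewrite same_support.
have r0 := support_total_bounds x_gne x_total x0_gt0.
have x_le_y j : x i j <= y i j.
  have [x_gt0|x_le0] := boolP (0 < x i j); last by rewrite eq_off_support.
  have y_gt0 : 0 < y i j by rewrite -same_support.
  have rj := support_total_bounds x_gne x_total x_gt0.
  rewrite -(marginal_decreasing rj) ?in_itv /= ?andbT //.
  rewrite (marginal_eq y_gne y_total y_gt0 y0_gt0) (marginal_eq x_gne x_total x_gt0 x0_gt0).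
  by rewrite (marginal_decreasing r0) ?in_itv /= ?andbT ?ltW.
have : \sum_(l < m) x i l < \sum_(l < m) y i l.
  rewrite (bigD1 j0) //= [X in _ < X](bigD1 j0) //=.
  by apply: ltr_leD => //; apply: ler_sum.
by rewrite x_full y_full ltxx.
Qed.

End TwoEquilibria.

Lemma gne_row_eq (x y : 'M[R]_(n, m)) i : GN x -> (forall j, xT x j = r j) ->
  GN y -> (forall j, xT y j = r j) -> (forall j, (0 < x i j) = (0 < y i j)) ->
  (\sum_(l < m) x i l == 1) = (\sum_(l < m) y i l == 1) ->
  forall j, x i j = y i j.
Proof.
move=> x_gne x_total y_gne y_total same_support same_full j.
have [x_full|x_slack] := eqVneq (\sum_(l < m) x i l) 1.
  have y_full : \sum_(l < m) y i l = 1 by apply/eqP; rewrite -same_full x_full.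
  have same_support' l : (0 < y i l) = (0 < x i l) by rewrite same_support.
  apply/le_anti/andP; split.
    exact: row_le_of_full_budget y_gne y_total x_gne x_total same_support' y_full x_full j.
  exact: row_le_of_full_budget x_gne x_total y_gne y_total same_support x_full y_full j.
have y_slack : \sum_(l < m) y i l != 1 by rewrite -same_full.
have [[x_in _] [y_in _]] := (x_gne, y_gne).
apply: row_eq_of_slack x_gne x_total y_gne y_total same_support _ _ j.
  by rewrite lt_neqAle x_slack in_Cn_row_sum.
by rewrite lt_neqAle y_slack in_Cn_row_sum.
Qed.

Definition support_pattern (x : 'M[R]_(n, m)) : {ffun 'I_n -> {ffun 'I_m -> bool} * bool} :=
  [ffun i => ([ffun j => 0 < x i j], \sum_(j < m) x i j == 1)].

Lemma support_pattern_inj (x y : 'M[R]_(n, m)) : GN x -> (forall j, xT x j = r j) ->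
  GN y -> (forall j, xT y j = r j) -> support_pattern x = support_pattern y -> x = y.
Proof.
move=> x_gne x_total y_gne y_total /ffunP same_pattern; apply/matrixP => i j.
move: (same_pattern i); rewrite !ffunE => -[/ffunP same_support same_full].
by apply: gne_row_eq => // l; have := same_support l; rewrite !ffunE.
Qed.

End Game.

Theorem theorem10 (R : realType) (n m : nat) (hn : (0 < n)%N) (hm : (0 < m)%N)
  (a k : 'I_n -> R) (Rr p : 'I_m -> R -> R) (omega : 'I_n -> 'I_m -> R)
  (hR : forall j (t : R), 0 <= t -> 1 < Rr j t)
  (hp01 : forall j (t : R), 0 <= t -> 0 <= p j t <= 1)
  (hp0 : forall j, p j 0 = 0)
  (hp1 : forall j (t : R), 1 <= t -> p j t = 1)
  (ha : forall i, 0 < a i <= 1)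
  (hk : forall i, 0 < k i)
  (hFc : forall i j, {within `[0, 1], continuous (Ffun (a i) (k i) (Rr j) (p j))}%classic)
  (hFd : forall i j (t : R), 0 < t < 1 ->
     derivable (Ffun (a i) (k i) (Rr j) (p j)) t 1 /\
     derive1 (Ffun (a i) (k i) (Rr j) (p j)) t < 0 /\
     derivable (derive1 (Ffun (a i) (k i) (Rr j) (p j))) t 1 /\
     derive1 (derive1 (Ffun (a i) (k i) (Rr j) (p j))) t < 0)
  (homega : forall i j, 0 < omega i j < 1 /\
     Ffun (a i) (k i) (Rr j) (p j) (omega i j) = 0)
  (r : 'I_m -> R) (hr : forall j, 0 <= r j <= 1)
  (s : seq 'M[R]_(n, m)) (hs : uniq s)
  (hsW : forall x, x \in s ->
     GNE a k Rr p omega x /\ in_Cn x /\ (forall j, xT x j = r j)) :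
  (size s <= 2 ^ (n * m.+1))%N.
Proof.
have -> : (2 ^ (n * m.+1) = #|{ffun 'I_n -> {ffun 'I_m -> bool} * bool}|)%N.
  by rewrite card_ffun card_prod card_ffun !card_bool !card_ord mulnC expnM expnSr.
apply: (uniq_size_le_card (@support_pattern R n m) hs).
move=> x y /hsW[x_gne [_ x_total]] /hsW[y_gne [_ y_total]].
exact: support_pattern_inj ha hFc hFd homega r x y x_gne x_total y_gne y_total.
Qed.
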